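(* Let $k$ be a commutative ring and $P,Q$ invertible $k$-modules. If $A$ is a $P$-Frobenius $k$-algebra and $B$ is a $Q$-Frobenius $k$-algebra, then the tensor product algebra $A\otimes_kB$ is a $P\otimes_kQ$-Frobenius algebra.
   Context: A $k$-module is invertible if it is finitely generated projective of constant rank one. For an invertible $P$, a $k$-algebra $A$ is $P$-Frobenius if it is finitely generated projective over $k$ and $A_A\cong\mathrm{Hom}_k(A,P)_A$ as right $A$-modules, where $(fa)(x)=f(ax)$. *)

From HB Require Import structures.
From mathcomp Require Import all_boot all_order all_algebra.

Set Implicit Arguments.
Unset Strict Implicit.
Unset Printing Implicit Defensive.

Import GRing.Theory.
Local Open Scope ring_scope.

(* Throughout, k is a commutative ring (possibly the zero ring) and k-modules
   are MathComp left modules [lmodType k]. *)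

Section Defs.
Variable k : comPzRingType.

Definition klinear (M N : lmodType k) (f : M -> N) : Prop :=
  forall (a : k) (x y : M), f (a *: x + y) = a *: f x + f y.

Definition kbilinear (M N X : lmodType k) (f : M -> N -> X) : Prop :=
  (forall m, klinear (f m)) /\ (forall n, klinear (fun m => f m n)).

(* A (unital, associative) k-algebra structure on the k-module A:
   a k-bilinear associative multiplication with a two-sided unit.
   (The zero algebra is allowed, unlike MathComp's [algType].) *)
Definition is_kalg (A : lmodType k) (mul : A -> A -> A) (one : A) : Prop :=
  [/\ kbilinear mul,
      forall x y z, mul x (mul y z) = mul (mul x y) z,
      forall x, mul one x = x &
      forall x, mul x one = x].

Definition fgproj (M : lmodType k) : Prop :=
  exists n (s : M -> 'rV[k]_n) (r : 'rV[k]_n -> M),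
    [/\ klinear s, klinear r & cancel s r].

(* M is invertible: finitely generated projective of constant rank one.
   For a presentation M = retract of k^n via s, r, the idempotent matrix
   E = (s o r) represents M; the rank of M at a point is the dimension of
   F (x)_k M for the residue field F, i.e. the rank of the image of E in F.
   Constant rank one: this dimension is 1 for every ring map k -> F into a
   field F. *)
Definition invertible_mod (M : lmodType k) : Prop :=
  exists n (s : M -> 'rV[k]_n) (r : 'rV[k]_n -> M),
    [/\ klinear s, klinear r, cancel s r &
      forall (F : fieldType) (phi : {rmorphism k -> F}),
        \rank (map_mx phi (\matrix_(i < n) s (r (delta_mx 0 i)))) = 1%N].

Definition is_tensor (M N T : lmodType k) (t : M -> N -> T) : Prop :=
  kbilinear t /\
  forall (X : lmodType k) (f : M -> N -> X), kbilinear f ->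
    (exists g : T -> X, klinear g /\ forall m n, g (t m n) = f m n) /\
    (forall g1 g2 : T -> X, klinear g1 -> klinear g2 ->
       (forall m n, g1 (t m n) = f m n) ->
       (forall m n, g2 (t m n) = f m n) -> g1 =1 g2).

(* A (with multiplication mul, unit one) is P-Frobenius: A is finitely
   generated projective over k and A_A is isomorphic, as a right A-module,
   to Hom_k(A, P) with (f a)(x) = f (a x). *)
Definition is_Frobenius (A : lmodType k) (mul : A -> A -> A) (one : A)
    (P : lmodType k) : Prop :=
  fgproj A /\
  exists phi : A -> A -> P,
    [/\ forall x, klinear (phi x),
        forall x y z, phi (x + y) z = phi x z + phi y z,
        forall x a z, phi (mul x a) z = phi x (mul a z),
        forall x y, phi x =1 phi y -> x = y &
        forall f : A -> P, klinear f -> exists x, phi x =1 f].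

End Defs.

From HB Require Import structures.
From mathcomp Require Import all_boot all_order all_algebra.
From Stdlib Require Import IndefiniteDescription.

(* Choose dual bases (e_i, f_i) of A and (e'_j, g_j) of B; the e_i (x) e'_j, with
   coordinates f_i (x) g_j, form a dual basis of A (x) B, which is therefore finitely
   generated projective.  A map phi : M -> Hom(M, P), k-linear in both arguments, is
   bijective exactly when there are k-linear alpha_i : P -> M with
   phi (alpha_i p) = f_i(-) p and sum_i alpha_i (phi x e_i) = x: the alpha_i p are the
   preimages of the f_i(-) p, and conversely F |-> sum_i alpha_i (F e_i) inverts phi.
   The pairing of A (x) B sending (a (x) b, a' (x) b') to phi_A a a' (x) phi_B b b' is
   right A (x) B-linear, and the alpha_i (x) beta_j are such maps for it. *)

Set Implicit Arguments.
Unset Strict Implicit.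
Unset Printing Implicit Defensive.
Import GRing.Theory.
Local Open Scope ring_scope.

Section KLinear.
Variable k : comPzRingType.

Section Morphism.
Variables (M N : lmodType k) (f : M -> N).
Hypothesis f_lin : klinear f.

Lemma klinear0 : f 0 = 0.
Proof. by have := f_lin (-1) 0 0; rewrite scaler0 addr0 scaleNr scale1r addNr. Qed.

Lemma klinearD x y : f (x + y) = f x + f y.
Proof. by have := f_lin 1 x y; rewrite !scale1r. Qed.

Lemma klinearZ a x : f (a *: x) = a *: f x.
Proof. by have := f_lin a x 0; rewrite !addr0 klinear0 addr0. Qed.

Lemma klinear_sum (I : Type) (r : seq I) (F : I -> M) :
  f (\sum_(i <- r) F i) = \sum_(i <- r) f (F i).
Proof. exact: (big_morph f klinearD klinear0). Qed.
End Morphism.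

Lemma klinear_comp (M N X : lmodType k) (f : M -> N) (g : N -> X) :
  klinear f -> klinear g -> klinear (fun x => g (f x)).
Proof. by move=> f_lin g_lin a x y; rewrite f_lin g_lin. Qed.

Lemma klinear_sumf (M N : lmodType k) (I : finType) (F : I -> M -> N) :
  (forall i, klinear (F i)) -> klinear (fun x => \sum_i F i x).
Proof.
move=> F_lin a x y; rewrite scaler_sumr -big_split /=.
by apply: eq_bigr => i _; rewrite F_lin.
Qed.

Lemma klinear_lincomb (M N : lmodType k) (c : k) (f g : M -> N) :
  klinear f -> klinear g -> klinear (fun x => c *: f x + g x).
Proof.
move=> f_lin g_lin a x y.
by rewrite f_lin g_lin !scalerDr !scalerA mulrC addrACA.
Qed.

Lemma klinear_scale (M : lmodType k) (c : k) : klinear (fun x : M => c *: x).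
Proof. by move=> a x y; rewrite scalerDr !scalerA mulrC. Qed.

Lemma klinear_scaler (M N : lmodType k) (g : M -> k^o) (w : N) :
  klinear g -> klinear (fun x => g x *: w).
Proof. by move=> g_lin a x y; rewrite g_lin scalerDl scalerA. Qed.

End KLinear.

Section Tensor.
Variables (k : comPzRingType) (M N T : lmodType k) (t : M -> N -> T).
Hypothesis Ht : is_tensor t.

Lemma tensor_klinearl n : klinear (fun m => t m n). Proof. exact: Ht.1.2. Qed.
Lemma tensor_klinearr m : klinear (t m). Proof. exact: Ht.1.1. Qed.

Lemma tensor_ext (X : lmodType k) (g1 g2 : T -> X) :
  klinear g1 -> klinear g2 -> (forall m n, g1 (t m n) = g2 (t m n)) -> g1 =1 g2.
Proof.
move=> g1_lin g2_lin g12.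
have g1t_bil : kbilinear (fun m n => g1 (t m n)).
  split=> [m|n]; [exact: klinear_comp (tensor_klinearr m) g1_lin
                 |exact: klinear_comp (tensor_klinearl n) g1_lin].
exact: (Ht.2 X _ g1t_bil).2 g1 g2 g1_lin g2_lin (fun _ _ => erefl) (fun m n => esym (g12 m n)).
Qed.

Definition tensor_lift (X : lmodType k) (f : M -> N -> X) (f_bil : kbilinear f) : T -> X :=
  proj1_sig (constructive_indefinite_description _ (Ht.2 X f f_bil).1).

Section Lift.
Variables (X : lmodType k) (f : M -> N -> X) (f_bil : kbilinear f).

Lemma tensor_lift_klinear : klinear (tensor_lift f_bil).
Proof. exact: (proj2_sig (constructive_indefinite_description _ (Ht.2 X f f_bil).1)).1. Qed.

Lemma tensor_liftE m n : tensor_lift f_bil (t m n) = f m n.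
Proof. exact: (proj2_sig (constructive_indefinite_description _ (Ht.2 X f f_bil).1)).2. Qed.
End Lift.

Lemma tensorZZ a b m n : t (a *: m) (b *: n) = (a * b) *: t m n.
Proof.
by rewrite (klinearZ (tensor_klinearl _)) (klinearZ (tensor_klinearr _)) scalerA.
Qed.

Lemma tensor_sum (I J : finType) (F : I -> M) (G : J -> N) :
  t (\sum_i F i) (\sum_j G j) = \sum_(ij : I * J) t (F ij.1) (G ij.2).
Proof.
rewrite -(pair_bigA _ (fun i j => t (F i) (G j))) (klinear_sum (tensor_klinearl _)).
by apply: eq_bigr => i _; rewrite (klinear_sum (tensor_klinearr _)).
Qed.

End Tensor.

Section DualBasis.
Variable k : comPzRingType.

Definition dual_basis (M : lmodType k) (I : finType) (e : I -> M) (f : I -> M -> k^o) :=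
  (forall i, klinear (f i)) /\ forall x, \sum_i f i x *: e i = x.

Lemma fgproj_dual_basis (M : lmodType k) :
  fgproj M -> exists n (e : 'I_n -> M) f, dual_basis e f.
Proof.
move=> [n [s [r [s_lin r_lin sK]]]].
exists n, (fun i => r (delta_mx 0 i)), (fun i x => s x 0 i); split.
  by move=> i a x y; rewrite s_lin !mxE.
move=> x; rewrite -{2}(sK x) {2}(row_sum_delta (s x)) (klinear_sum r_lin).
by apply: eq_bigr => i _; rewrite (klinearZ r_lin).
Qed.

Lemma dual_basis_fgproj (M : lmodType k) (I : finType) (e : I -> M) f :
  dual_basis e f -> fgproj M.
Proof.
move=> [f_lin fK].
pose s x : 'rV[k]_#|I| := \row_i f (enum_val i) x.
pose r (v : 'rV[k]_#|I|) := \sum_i v 0 i *: e (enum_val i).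
exists #|I|, s, r; split.
- by move=> a x y; apply/rowP => i; rewrite !mxE f_lin.
- move=> a v w; rewrite /r scaler_sumr -big_split /=.
  by apply: eq_bigr => i _; rewrite !mxE scalerDl scalerA.
- move=> x; rewrite -{2}(fK x) (reindex (@enum_val I predT)) /=.
    by apply: eq_bigr => i _; rewrite mxE.
  by exists enum_rank => i _; [rewrite enum_valK | rewrite enum_rankK].
Qed.

Section TensorBasis.
Variables (A B T : lmodType k) (t : A -> B -> T).
Hypothesis Ht : is_tensor t.
Variables (I J : finType) (eA : I -> A) (fA : I -> A -> k^o)
                          (eB : J -> B) (fB : J -> B -> k^o).

Lemma tensor_dual_basis : dual_basis eA fA -> dual_basis eB fB ->
  exists fT : I * J -> T -> k^o,
    dual_basis (fun ij => t (eA ij.1) (eB ij.2)) fT /\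
    forall ij a b, fT ij (t a b) = fA ij.1 a * fB ij.2 b.
Proof.
move=> [fA_lin fAK] [fB_lin fBK].
have coord_bil ij : kbilinear (fun a b => fA ij.1 a * fB ij.2 b : k^o).
  split=> [a|b] c x y /=; rewrite ?fA_lin ?fB_lin.
  - rewrite mulrDr; congr (_ + _); exact: mulrCA.
  - rewrite mulrDl; congr (_ + _); exact/esym/mulrA.
exists (fun ij => tensor_lift Ht (coord_bil ij)).
split=> [|ij a b]; last exact: tensor_liftE.
split=> [ij|x]; first exact: tensor_lift_klinear.
move: x; apply: (tensor_ext Ht) => //.
  by apply: klinear_sumf => ij; apply: klinear_scaler; apply: tensor_lift_klinear.
move=> a b /=; rewrite -[in RHS](fAK a) -[in RHS](fBK b) (tensor_sum Ht).
by apply: eq_bigr => ij _; rewrite tensor_liftE (tensorZZ Ht).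
Qed.
End TensorBasis.

End DualBasis.

Section FrobeniusCoords.
Variables (k : comPzRingType) (M P : lmodType k).

Definition frobenius_iso (mul : M -> M -> M) (phi : M -> M -> P) : Prop :=
  [/\ forall x, klinear (phi x),
      forall x y z, phi (x + y) z = phi x z + phi y z,
      forall x a z, phi (mul x a) z = phi x (mul a z),
      forall x y, phi x =1 phi y -> x = y &
      forall f : M -> P, klinear f -> exists x, phi x =1 f].

Lemma frobenius_iso_klinearl (mul : M -> M -> M) (one : M) (phi : M -> M -> P) :
  is_kalg mul one -> frobenius_iso mul phi -> forall z, klinear (fun x => phi x z).
Proof.
move=> [[mul_linr mul_linl] _ mul1x mulx1] [phi_lin phiD phi_mul _ _] z c x y.
have mulxZ1 x' : mul x' (c *: one) = c *: x'.
  by rewrite -[c *: one]addr0 mul_linr (klinear0 (mul_linr x')) mulx1 addr0.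
have mulZ1x z' : mul (c *: one) z' = c *: z'.
  by rewrite -[c *: one]addr0 mul_linl (klinear0 (mul_linl z')) mul1x addr0.
by rewrite phiD -mulxZ1 phi_mul mulZ1x (klinearZ (phi_lin x)).
Qed.

Definition frobenius_coords (I : finType) (phi : M -> M -> P) (e : I -> M)
    (f : I -> M -> k^o) (alpha : I -> P -> M) :=
  [/\ forall i, klinear (alpha i),
      forall i p z, phi (alpha i p) z = f i z *: p &
      forall x, \sum_i alpha i (phi x (e i)) = x].

Variables (I : finType) (e : I -> M) (f : I -> M -> k^o) (phi : M -> M -> P).
Hypotheses (phi_lin : forall x, klinear (phi x))
           (phi_linl : forall z, klinear (fun x => phi x z)).

Lemma frobenius_iso_coords (mul : M -> M -> M) : dual_basis e f ->
  frobenius_iso mul phi -> exists alpha, frobenius_coords phi e f alpha.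
Proof.
move=> [f_lin fK] [_ _ _ phi_inj phi_surj].
have [alpha alphaE] : exists alpha : I * P -> M,
    forall ip z, phi (alpha ip) z = f ip.1 z *: ip.2.
  apply: (functional_choice (fun (ip : I * P) x => forall z, phi x z = f ip.1 z *: ip.2)).
  by move=> ip; apply: phi_surj; apply: klinear_scaler.
exists (fun i p => alpha (i, p)); split.
- move=> i c p q; apply: phi_inj => z.
  by rewrite phi_linl !alphaE /= scalerDr !scalerA mulrC.
- by move=> i p z; rewrite alphaE.
- move=> x; apply: phi_inj => z.
  rewrite (klinear_sum (phi_linl z)) -[in RHS](fK z) (klinear_sum (phi_lin x)).
  by apply: eq_bigr => i _; rewrite alphaE (klinearZ (phi_lin x)).
Qed.

Lemma frobenius_coords_iso (mul : M -> M -> M) alpha :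
  (forall x a z, phi (mul x a) z = phi x (mul a z)) ->
  dual_basis e f -> frobenius_coords phi e f alpha -> frobenius_iso mul phi.
Proof.
move=> phi_mul [_ fK] [alpha_lin alphaE alphaK]; split=> //.
- by move=> x y z; rewrite (klinearD (phi_linl z)).
- by move=> x y phixy; rewrite -[x]alphaK -[y]alphaK; apply: eq_bigr => i _; rewrite phixy.
- move=> F F_lin; exists (\sum_i alpha i (F (e i))) => z.
  rewrite (klinear_sum (phi_linl z)) -[in RHS](fK z) (klinear_sum F_lin).
  by apply: eq_bigr => i _; rewrite alphaE (klinearZ F_lin).
Qed.

End FrobeniusCoords.

Section TensorPairing.
Variables (k : comPzRingType) (A B P Q T U : lmodType k).
Variables (t : A -> B -> T) (u : P -> Q -> U).
Hypotheses (Ht : is_tensor t) (Hu : is_tensor u).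
Variables (phiA : A -> A -> P) (phiB : B -> B -> Q).
Hypotheses (phiA_lin : forall x, klinear (phiA x))
           (phiA_linl : forall z, klinear (fun x => phiA x z))
           (phiB_lin : forall x, klinear (phiB x))
           (phiB_linl : forall z, klinear (fun x => phiB x z)).

Let pure_pairing_bilr a b : kbilinear (fun a' b' => u (phiA a a') (phiB b b')).
Proof.
split=> [a'|b']; first exact: klinear_comp (phiB_lin b) (tensor_klinearr Hu _).
exact: klinear_comp (phiA_lin a) (tensor_klinearl Hu _).
Qed.

Let pure_pairing a b := tensor_lift Ht (pure_pairing_bilr a b).

Let pure_pairing_klinear a b : klinear (pure_pairing a b).
Proof. exact: tensor_lift_klinear. Qed.

Let pure_pairingE a b a' b' : pure_pairing a b (t a' b') = u (phiA a a') (phiB b b').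
Proof. exact: tensor_liftE. Qed.

Let pure_pairing_bill z : kbilinear (fun a b => pure_pairing a b z).
Proof.
split=> [a|b] c x y; move: z; apply: (tensor_ext Ht);
  do ?[exact: pure_pairing_klinear | by apply: klinear_lincomb];
  move=> a' b'; rewrite !pure_pairingE.
- by rewrite phiB_linl (tensor_klinearr Hu).
- by rewrite phiA_linl (tensor_klinearl Hu).
Qed.

Definition tensor_pairing (x z : T) : U := tensor_lift Ht (pure_pairing_bill z) x.

Lemma tensor_pairingE a b a' b' :
  tensor_pairing (t a b) (t a' b') = u (phiA a a') (phiB b b').
Proof. by rewrite /tensor_pairing tensor_liftE pure_pairingE. Qed.

Lemma tensor_pairing_klinearl z : klinear (fun x => tensor_pairing x z).
Proof. exact: tensor_lift_klinear. Qed.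

Lemma tensor_pairing_klinear x : klinear (tensor_pairing x).
Proof.
move=> c z z'; move: x; apply: (tensor_ext Ht).
- exact: tensor_pairing_klinearl.
- by apply: klinear_lincomb; apply: tensor_pairing_klinearl.
- by move=> a b; rewrite /tensor_pairing !tensor_liftE pure_pairing_klinear.
Qed.

Lemma tensor_pairing_mul (mulA : A -> A -> A) (mulB : B -> B -> B) (mulT : T -> T -> T) :
  kbilinear mulT ->
  (forall a b a' b', mulT (t a b) (t a' b') = t (mulA a a') (mulB b b')) ->
  (forall x a z, phiA (mulA x a) z = phiA x (mulA a z)) ->
  (forall x b z, phiB (mulB x b) z = phiB x (mulB b z)) ->
  forall x y z, tensor_pairing (mulT x y) z = tensor_pairing x (mulT y z).
Proof.
move=> [mulT_linr mulT_linl] mulTE phiA_mul phiB_mul x y z.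
move: x; apply: (tensor_ext Ht).
- exact: klinear_comp (mulT_linl y) (tensor_pairing_klinearl z).
- exact: tensor_pairing_klinearl.
move=> a b; move: y; apply: (tensor_ext Ht).
- exact: klinear_comp (mulT_linr _) (tensor_pairing_klinearl z).
- exact: klinear_comp (mulT_linl z) (tensor_pairing_klinear _).
move=> a' b'; move: z; apply: (tensor_ext Ht).
- exact: tensor_pairing_klinear.
- exact: klinear_comp (mulT_linr _) (tensor_pairing_klinear _).
by move=> a'' b''; rewrite !mulTE !tensor_pairingE phiA_mul phiB_mul.
Qed.

Lemma tensor_frobenius_coords (I J : finType)
    (eA : I -> A) (fA : I -> A -> k^o) (alphaA : I -> P -> A)
    (eB : J -> B) (fB : J -> B -> k^o) (alphaB : J -> Q -> B)
    (fT : I * J -> T -> k^o) :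
  frobenius_coords phiA eA fA alphaA -> frobenius_coords phiB eB fB alphaB ->
  (forall ij, klinear (fT ij)) ->
  (forall ij a b, fT ij (t a b) = fA ij.1 a * fB ij.2 b) ->
  exists alphaT, frobenius_coords tensor_pairing (fun ij => t (eA ij.1) (eB ij.2)) fT alphaT.
Proof.
move=> [alphaA_lin alphaAE alphaAK] [alphaB_lin alphaBE alphaBK] fT_lin fTE.
have alpha_bil ij : kbilinear (fun p q => t (alphaA ij.1 p) (alphaB ij.2 q)).
  split=> [p|q]; first exact: klinear_comp (alphaB_lin _) (tensor_klinearr Ht _).
  exact: klinear_comp (alphaA_lin _) (tensor_klinearl Ht _).
exists (fun ij => tensor_lift Hu (alpha_bil ij)); split.
- by move=> ij; apply: tensor_lift_klinear.
- move=> ij w z; move: z; apply: (tensor_ext Ht).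
  + exact: tensor_pairing_klinear.
  + exact: klinear_scaler.
  move=> a b; move: w; apply: (tensor_ext Hu).
  + exact: klinear_comp (tensor_lift_klinear _ _) (tensor_pairing_klinearl _).
  + exact: klinear_scale.
  by move=> p q; rewrite tensor_liftE tensor_pairingE alphaAE alphaBE (tensorZZ Hu) fTE.
- apply: (tensor_ext Ht).
  + apply: klinear_sumf => ij.
    exact: klinear_comp (tensor_pairing_klinearl _) (tensor_lift_klinear _ _).
  + by [].
  move=> a b; rewrite -[in RHS](alphaAK a) -[in RHS](alphaBK b) (tensor_sum Ht).
  by apply: eq_bigr => ij _; rewrite tensor_pairingE tensor_liftE.
Qed.

End TensorPairing.

Theorem lemma2p9 (k : comPzRingType) (P Q : lmodType k)
    (A : lmodType k) (mulA : A -> A -> A) (oneA : A)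
    (B : lmodType k) (mulB : B -> B -> B) (oneB : B)
    (T : lmodType k) (t : A -> B -> T) (mulT : T -> T -> T) (oneT : T)
    (U : lmodType k) (u : P -> Q -> U) :
  invertible_mod P -> invertible_mod Q ->
  is_kalg mulA oneA -> is_kalg mulB oneB ->
  is_Frobenius mulA oneA P -> is_Frobenius mulB oneB Q ->
  (* (T, t) is the tensor product A (x)_k B with its tensor algebra structure *)
  is_tensor t -> is_kalg mulT oneT ->
  (forall a b a' b', mulT (t a b) (t a' b') = t (mulA a a') (mulB b b')) ->
  oneT = t oneA oneB ->
  (* (U, u) is the tensor product P (x)_k Q *)
  is_tensor u ->
  is_Frobenius mulT oneT U.
Proof.
move=> _ _ algA algB [fgA [phiA isoA]] [fgB [phiB isoB]] Ht [mulT_bil _ _ _] mulTE _ Hu.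
have [phiA_lin _ phiA_mul _ _] := isoA.
have [phiB_lin _ phiB_mul _ _] := isoB.
have phiA_linl := frobenius_iso_klinearl algA isoA.
have phiB_linl := frobenius_iso_klinearl algB isoB.
have [nA [eA [fA basisA]]] := fgproj_dual_basis fgA.
have [nB [eB [fB basisB]]] := fgproj_dual_basis fgB.
have [fT [basisT fTE]] := tensor_dual_basis Ht basisA basisB.
have [alphaA coordsA] := frobenius_iso_coords phiA_lin phiA_linl basisA isoA.
have [alphaB coordsB] := frobenius_iso_coords phiB_lin phiB_linl basisB isoB.
have [alphaT coordsT] := tensor_frobenius_coords Ht Hu phiA_lin phiA_linl
  phiB_lin phiB_linl coordsA coordsB basisT.1 fTE.
split; first exact: dual_basis_fgproj basisT.
exists (tensor_pairing Ht Hu phiA_lin phiA_linl phiB_lin phiB_linl).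
apply: frobenius_coords_iso basisT coordsT.
- exact: tensor_pairing_klinear.
- exact: tensor_pairing_klinearl.
- exact: tensor_pairing_mul mulT_bil mulTE phiA_mul phiB_mul.
Qed.
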